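(* If $G$ is a finite, connected, weakly-cliqued graph with $\chi(G)\ge 3$, then $G$ is trivially power-colorable.
   Context: Graphs are simple and undirected; a $k$-coloring is a proper coloring with colors in $\{0,\dots,k-1\}$. A graph $G$ with $\chi(G)=k$ is weakly-cliqued if every vertex lies in a clique of size $k$. For graphs $(G_i)_{i\in I}$, the product $\times_{i\in I}G_i$ has vertex set $\times_{i\in I}V(G_i)$, with $(u_i)$ adjacent to $(v_i)$ iff $u_iv_i\in E(G_i)$ for all $i$; $G^n$ is the product of $n$ copies of $G$. A coloring $\Phi$ of $\times_{i\in I}G_i$ is trivial if there exist $i^*\in I$ and a proper coloring $\phi$ of $G_{i^*}$ with $\Phi(v)=\phi(v_{i^*})$ for all $v$. A graph $H$ is trivially power-colorable if for every positive integer $n$, every $\chi(H)$-coloring of $H^n$ (viewed as the product of $n$ copies of $H$) is trivial. *)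

From mathcomp Require Import all_boot.
Set Implicit Arguments. Unset Strict Implicit. Unset Printing Implicit Defensive.

Definition simple_graph (T : finType) (e : rel T) : Prop :=
  symmetric e /\ irreflexive e.

Definition proper_coloring (T : Type) (e : rel T) (k : nat) (c : T -> 'I_k) : Prop :=
  forall x y, e x y -> c x != c y.

Definition colorableb (T : finType) (e : rel T) (k : nat) : bool :=
  [exists c : {ffun T -> 'I_k}, [forall x, forall y, e x y ==> (c x != c y)]].

Lemma colorable_card (T : finType) (e : rel T) :
  irreflexive e -> exists k, colorableb e k.
Proof.
move=> irr; exists #|T|; apply/existsP.
exists [ffun x => enum_rank x]; apply/forallP => x; apply/forallP => y.
apply/implyP => exy; rewrite !ffunE; apply/negP => /eqP/enum_rank_inj Exy.
by subst; rewrite irr in exy.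
Qed.

(* chromatic number: the least k admitting a proper k-coloring.  For a loopless
   graph some k <= #|T| works (lemma colorable_card), so searching 0..#|T| suffices. *)
Definition chi (T : finType) (e : rel T) : nat :=
  find (colorableb e) (iota 0 #|T|.+1).

Definition clique (T : finType) (e : rel T) (K : {set T}) : Prop :=
  forall x y, x \in K -> y \in K -> x != y -> e x y.

Definition weakly_cliqued (T : finType) (e : rel T) : Prop :=
  forall v, exists K : {set T}, [/\ v \in K, clique e K & #|K| = chi e].

Definition connected (T : finType) (e : rel T) : Prop :=
  forall x y, connect e x y.

Definition power_rel (T : finType) (e : rel T) (n : nat) : rel {ffun 'I_n -> T} :=
  fun u v => [forall i, e (u i) (v i)].

Definition trivial_coloring (T : finType) (e : rel T) (n k : nat)
    (Phi : {ffun 'I_n -> T} -> 'I_k) : Prop :=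
  exists (i : 'I_n) (phi : T -> 'I_k),
    proper_coloring e phi /\ forall v, Phi v = phi (v i).

Definition trivially_power_colorable (T : finType) (e : rel T) : Prop :=
  forall n : nat, 0 < n ->
  forall Phi : {ffun 'I_n -> T} -> 'I_(chi e),
    proper_coloring (@power_rel T e n) Phi -> trivial_coloring e Phi.

From mathcomp Require Import all_boot fingroup perm zify.
Set Implicit Arguments. Unset Strict Implicit. Unset Printing Implicit Defensive.

(* Of the hypotheses only the following is used: the edge
   relation is symmetric, H is connected, and every vertex v lies in a k-clique,
   presented as a map 'I_k -> T sending a fixed index i0 to v.

   1. Latin squares: a map M : 'I_k -> 'I_k -> 'I_k with M i j <> M i' j'
      whenever i <> i' and j <> j' (a k-coloring of K_k x K_k) is constant
      along every row or along every column (latin_lines).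
   2. Two factors: let Phi be a proper k-coloring of a product A x B of
      connected graphs in which every vertex lies in a k-clique.  For cliques
      f of A and g of B, (i, j) |-> Phi (f i) (g j) is such a square; its
      orientation cannot change between adjacent cliques (no_mixed_squares),
      so by connectivity it is the same everywhere, and then Phi depends on
      one factor only (product_coloring_factor).
   3. Powers: H^n is connected (this needs three clique indices, i.e. k >= 3)
      and has k-cliques coordinatewise, so splitting H^(n+1) = H^n x H and
      inducting on n, every proper k-coloring of H^n depends on a single
      coordinate (power_coloring_coordinate); this is the main theorem. *)

Lemma exists_other k (j : 'I_k) : 1 < k -> exists j' : 'I_k, j' != j.
Proof.
move=> k1; case: (eqVneq j (Ordinal (ltnW k1))) => [->|j0].
  by exists (Ordinal k1).
by exists (Ordinal (ltnW k1)); rewrite eq_sym.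
Qed.

Lemma ord_neq_gt1 k (i j : 'I_k) : i != j -> 1 < k.
Proof.
move=> ij; rewrite ltnNge; apply: contra ij => k_le1; apply/eqP/val_inj => /=.
by have := ltn_ord i; have := ltn_ord j; lia.
Qed.

(* An injective endofunction of 'I_k is onto; this is where the number of
   colors equal to the clique size is essential. *)
Lemma ord_onto k (s : 'I_k -> 'I_k) :
  (forall i i', i != i' -> s i != s i') -> forall c, exists i, s i = c.
Proof.
move=> s_neq c.
have s_inj : injective s.
  by move=> i i' /eqP; apply: contraTeq; apply: s_neq.
by have /codomP [i ->] := injF_onto s_inj c; exists i.
Qed.

(* M is a proper coloring of K_k x K_k: cells in distinct rows and distinct
   columns get distinct colors. *)
Definition latin k (M : 'I_k -> 'I_k -> 'I_k) : Prop :=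
  forall i i' j j', i != i' -> j != j' -> M i j != M i' j'.

Definition const_rows k (M : 'I_k -> 'I_k -> 'I_k) : Prop :=
  forall i j j', M i j = M i j'.

(* Each column of M is constant; the binder order makes the column-constancy
   of the transpose of M literally the row-constancy of M. *)
Definition const_cols k (M : 'I_k -> 'I_k -> 'I_k) : Prop :=
  forall j i i', M i j = M i' j.

Section LatinSquares.
Variables (k : nat) (M : 'I_k -> 'I_k -> 'I_k).
Hypothesis M_latin : latin M.

(* For s <> t and p <> q, the color of (s, p) reappears at (s, q) or (t, p):
   along a permutation sigma with sigma s = q and sigma t = p the diagonal
   i |-> M i (sigma i) takes all k colors, and outside row s and column p
   the color of (s, p) is forbidden. *)
Lemma latin_cross s t p q : s != t -> p != q ->
  M s p = M s q \/ M s p = M t p.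
Proof.
move=> st pq; pose sigma : {perm 'I_k} :=
  (tperm s q * tperm (tperm s q t) p)%g.
have sigma_s : sigma s = q.
  have t'q : tperm s q t != q by rewrite -{2}(tpermL s q) (inj_eq perm_inj) eq_sym.
  by rewrite permM tpermL (tpermD t'q pq).
have sigma_t : sigma t = p by rewrite permM tpermL.
have diag_neq i i' : i != i' -> M i (sigma i) != M i' (sigma i').
  by move=> ii'; apply: M_latin; rewrite // (inj_eq perm_inj).
have [i Mi] := ord_onto diag_neq (M s p).
case: (eqVneq i s) => [is_s|i_s]; first by left; rewrite -Mi is_s sigma_s.
case: (eqVneq i t) => [it|i_t]; first by right; rewrite -Mi it sigma_t.
have sigma_i : sigma i != p by rewrite -sigma_t (inj_eq perm_inj).
by have := M_latin i_s sigma_i; rewrite Mi eqxx.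
Qed.

(* A latin square is row-constant or column-constant: if some row s is not
   constant, latin_cross makes every column constant. *)
Lemma latin_lines : const_rows M \/ const_cols M.
Proof.
case: (boolP [forall i, forall j, forall j', M i j == M i j']) => [rows|].
  by left=> i j j'; apply/eqP; move: rows => /forallP/(_ i)/forallP/(_ j)/forallP.
move=> /forallPn [s /forallPn [p /forallPn [q Mpq]]]; right.
have col_const p' q' : M s p' != M s q' -> forall t, M t p' = M s p'.
  move=> Mpq' t; case: (eqVneq s t) => [<- //|st].
  have pq' : p' != q' by apply: contraNneq Mpq' => ->.
  by case: (latin_cross st pq') => E; rewrite E ?eqxx in Mpq' *.
have cols_eq r t : M t r = M s r.
  case: (eqVneq (M s r) (M s p)) => Mr; last exact: (col_const r p).
  by apply: (col_const r q); rewrite Mr.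
by move=> j i i'; rewrite cols_eq (cols_eq j i').
Qed.

Lemma latin_tr : latin (fun j i => M i j).
Proof. by move=> j j' i i' jj' ii'; apply: M_latin. Qed.

Lemma const_cols_row_onto : 1 < k -> const_cols M ->
  forall i c, exists j, M i j = c.
Proof.
move=> k1 cols i; apply: ord_onto => j j' jj'.
have [i' i'i] := exists_other i k1.
by rewrite (cols _ i i'); apply: M_latin; rewrite // eq_sym.
Qed.

End LatinSquares.

Definition kclique (T : Type) (e : rel T) k (f : 'I_k -> T) : Prop :=
  forall i j, i != j -> e (f i) (f j).

Definition product_proper (A B : Type) (eA : rel A) (eB : rel B) k
    (Phi : A -> B -> 'I_k) : Prop :=
  forall a a' b b', eA a a' -> eB b b' -> Phi a b != Phi a' b'.

Definition square (A B : Type) k (Phi : A -> B -> 'I_k)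
    (f : 'I_k -> A) (g : 'I_k -> B) : 'I_k -> 'I_k -> 'I_k :=
  fun i j => Phi (f i) (g j).

Lemma product_proper_flip (A B : Type) (eA : rel A) (eB : rel B) k
    (Phi : A -> B -> 'I_k) :
  product_proper eA eB Phi -> product_proper eB eA (fun b a => Phi a b).
Proof. by move=> Phi_proper b b' a a' ebb eaa; apply: Phi_proper. Qed.

Section ProductSquares.
Variables (A B : Type) (eA : rel A) (eB : rel B) (k : nat).
Variable Phi : A -> B -> 'I_k.
Hypotheses (k_gt1 : 1 < k) (Phi_proper : product_proper eA eB Phi).

Lemma square_latin f g :
  kclique eA f -> kclique eB g -> latin (square Phi f g).
Proof. by move=> cf cg i i' j j' ii' jj'; apply: Phi_proper; [apply: cf | apply: cg]. Qed.

Lemma square_lines f g : kclique eA f -> kclique eB g ->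
  const_rows (square Phi f g) \/ const_cols (square Phi f g).
Proof. by move=> cf cg; apply/latin_lines/square_latin. Qed.

(* A column-constant square over g and a row-constant square over g' cannot
   coexist when g and g' are joined by an edge: column j' of the second
   square takes the color of column j of the first, next to it. *)
Lemma no_mixed_squares f g g' j j' :
  kclique eA f -> kclique eB g -> kclique eB g' -> eB (g j) (g' j') ->
  const_cols (square Phi f g) -> const_rows (square Phi f g') -> False.
Proof.
move=> cf cg cg' egg' cols rows.
have col_onto := const_cols_row_onto (latin_tr (square_latin cf cg')) k_gt1 rows.
have [i Ei] := col_onto j' (Phi (f j) (g j)).
have [i' i'i] := exists_other i k_gt1.
have := Phi_proper (cf i' i i'i) egg'.
by move: (cols j i' j) Ei; rewrite /square => -> ->; rewrite eqxx.
Qed.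

Lemma const_cols_edge f g i j a' :
  kclique eA f -> kclique eB g -> eA (f i) a' ->
  const_cols (square Phi f g) -> Phi (f i) (g j) = Phi a' (g j).
Proof.
move=> cf cg ea cols.
have [j2 Ej2] := const_cols_row_onto (square_latin cf cg) k_gt1 cols i (Phi a' (g j)).
move: Ej2; rewrite /square; case: (eqVneq j2 j) => [-> -> //|j2j Ej2].
by have := Phi_proper ea (cg _ _ j2j); rewrite Ej2 eqxx.
Qed.

End ProductSquares.

Definition rooted_cliques (T : Type) (e : rel T) k (i0 : 'I_k)
    (cl : T -> 'I_k -> T) : Prop :=
  forall v, kclique e (cl v) /\ cl v i0 = v.

Lemma connect_propagate (T : finType) (e : rel T) (Q : T -> Prop) x y :
  Q x -> (forall y z, Q y -> e y z -> Q z) -> connect e x y -> Q y.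
Proof.
move=> Qx step /connectP [p]; elim: p x Qx => [|z p IH] x Qx /=; first by move=> _ ->.
by case/andP=> exz; apply: IH (step _ _ Qx exz).
Qed.

Section TwoFactors.
Variables (A B : finType) (eA : rel A) (eB : rel B) (k : nat) (i0 : 'I_k).
Variables (clA : A -> 'I_k -> A) (clB : B -> 'I_k -> B) (Phi : A -> B -> 'I_k).
Hypotheses (k_gt1 : 1 < k) (eA_sym : symmetric eA).
Hypotheses (connA : connected eA) (connB : connected eB).
Hypothesis clA_rooted : rooted_cliques eA i0 clA.
Hypothesis clB_rooted : rooted_cliques eB i0 clB.
Hypothesis Phi_proper : product_proper eA eB Phi.

Lemma const_cols_spread a0 b0 : const_cols (square Phi (clA a0) (clB b0)) ->
  forall a b, const_cols (square Phi (clA a) (clB b)).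
Proof.
move=> cols0 a b.
have along_A x : const_cols (square Phi (clA x) (clB b0)).
  apply: (connect_propagate (Q := fun x => const_cols (square Phi (clA x) (clB b0)))
    cols0 _ (connA a0 x)) => y z colsy eyz.
  have [[cy ry] [cz rz]] := (clA_rooted y, clA_rooted z).
  have [cb _] := clB_rooted b0.
  case: (square_lines Phi_proper cz cb) => // rowsz; exfalso.
  apply: (no_mixed_squares k_gt1 (product_proper_flip Phi_proper) cb cz cy
    (j := i0) (j' := i0) _ rowsz colsy).
  by rewrite ry rz eA_sym.
apply: (connect_propagate (Q := fun y => const_cols (square Phi (clA a) (clB y)))
  (along_A a) _ (connB b0 b)) => y z colsy eyz.
have [[cy ry] [cz rz]] := (clB_rooted y, clB_rooted z).
have [ca _] := clA_rooted a.
case: (square_lines Phi_proper ca cz) => // rowsz; exfalso.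
by apply: (no_mixed_squares k_gt1 Phi_proper ca cy cz (j := i0) (j' := i0) _ colsy rowsz);
  rewrite ry rz.
Qed.

Lemma const_cols_factor a0 b0 : const_cols (square Phi (clA a0) (clB b0)) ->
  forall a a' b, Phi a b = Phi a' b.
Proof.
move=> cols0 a a' b.
apply: (connect_propagate (Q := fun x => Phi a b = Phi x b) (erefl _) _ (connA a a'))
  => x y -> exy.
have [[cx rx] [cb rb]] := (clA_rooted x, clB_rooted b).
have := const_cols_edge k_gt1 Phi_proper (i := i0) i0 (a' := y) cx cb _
  (const_cols_spread cols0 x b).
by rewrite rx rb; apply.
Qed.

End TwoFactors.

Lemma product_coloring_factor (A B : finType) (eA : rel A) (eB : rel B) k
    (i0 : 'I_k) (clA : A -> 'I_k -> A) (clB : B -> 'I_k -> B)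
    (Phi : A -> B -> 'I_k) :
  1 < k -> symmetric eA -> symmetric eB -> connected eA -> connected eB ->
  rooted_cliques eA i0 clA -> rooted_cliques eB i0 clB ->
  product_proper eA eB Phi ->
  (forall a a' b, Phi a b = Phi a' b) \/ (forall a b b', Phi a b = Phi a b').
Proof.
move=> k_gt1 eA_sym eB_sym connA connB clA_rooted clB_rooted Phi_proper.
case: (boolP [forall a, forall a', forall b, Phi a b == Phi a' b]) => [indep|].
  by left=> a a' b; apply/eqP; move: indep => /forallP/(_ a)/forallP/(_ a')/forallP.
move=> /forallPn [a /forallPn [a' /forallPn [b Phi_neq]]]; right.
have [[ca _] [cb _]] := (clA_rooted a, clB_rooted b).
case: (square_lines Phi_proper ca cb) => [rows|cols]; last first.
  by rewrite (const_cols_factor k_gt1 eA_sym connA connB clA_rooted clB_rooted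
    Phi_proper cols a a' b) eqxx in Phi_neq.
move=> x y y'; exact: (const_cols_factor k_gt1 eB_sym connB connA clB_rooted
  clA_rooted (product_proper_flip Phi_proper) rows y y' x).
Qed.

Definition upd (T : Type) n (u : {ffun 'I_n -> T}) (j : 'I_n) (y : T) :
    {ffun 'I_n -> T} :=
  [ffun l => if l == j then y else u l].

Lemma upd_same (T : Type) n (u : {ffun 'I_n -> T}) j : upd u j (u j) = u.
Proof. by apply/ffunP => l; rewrite ffunE; case: eqP => [->|]. Qed.

Lemma upd_upd (T : Type) n (u : {ffun 'I_n -> T}) j y z :
  upd (upd u j y) j z = upd u j z.
Proof. by apply/ffunP => l; rewrite !ffunE; case: eqP. Qed.

Lemma upd_at (T : Type) n (u : {ffun 'I_n -> T}) j y : upd u j y j = y.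
Proof. by rewrite ffunE eqxx. Qed.

Lemma upd_edge (T : finType) (e : rel T) n (a b : {ffun 'I_n -> T}) j x y :
  @power_rel _ e n a b -> e x y -> @power_rel _ e n (upd a j x) (upd b j y).
Proof. by move=> /forallP eab exy; apply/forallP => l; rewrite !ffunE; case: eqP. Qed.

(* The identification H^(n+1) = H^n x H, with the last coordinate split off. *)
Definition extend (T : Type) n (a : {ffun 'I_n -> T}) (b : T) : {ffun 'I_n.+1 -> T} :=
  [ffun l => if unlift ord_max l is Some l' then a l' else b].

Definition restrict (T : Type) n (u : {ffun 'I_n.+1 -> T}) : {ffun 'I_n -> T} :=
  [ffun l => u (lift ord_max l)].

Lemma extendK (T : Type) n (u : {ffun 'I_n.+1 -> T}) :
  extend (restrict u) (u ord_max) = u.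
Proof.
by apply/ffunP => l; rewrite ffunE; case: unliftP => [l' ->|->] //; rewrite ffunE.
Qed.

Lemma extend_edge (T : finType) (e : rel T) n (a a' : {ffun 'I_n -> T}) b b' :
  @power_rel _ e n a a' -> e b b' -> @power_rel _ e n.+1 (extend a b) (extend a' b').
Proof.
move=> /forallP eaa' ebb'; apply/forallP => l; rewrite !ffunE.
by case: (unlift ord_max l).
Qed.

Section PowerGraph.
Variables (T : finType) (e : rel T) (k : nat) (cl : T -> 'I_k -> T) (i0 i1 i2 : 'I_k).
Hypotheses (e_sym : symmetric e) (e_conn : connected e).
Hypothesis cl_rooted : rooted_cliques e i0 cl.
Hypotheses (i01 : i0 != i1) (i12 : i1 != i2) (i20 : i2 != i0).

Definition power_clique n (u : {ffun 'I_n -> T}) (s : 'I_k) : {ffun 'I_n -> T} :=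
  [ffun l => cl (u l) s].

Lemma power_sym n : symmetric (@power_rel _ e n).
Proof. by move=> u v; apply/forallP/forallP => E l; rewrite e_sym. Qed.

Lemma power_rooted n : rooted_cliques (@power_rel _ e n) i0 (@power_clique n).
Proof.
move=> u; split.
  by move=> s s' ss'; apply/forallP => l; rewrite !ffunE; apply: (cl_rooted (u l)).1.
by apply/ffunP => l; rewrite ffunE (cl_rooted (u l)).2.
Qed.

(* Moving one coordinate along an edge is a walk of length 3 in H^n: the
   other coordinates travel around the triangle i0 -> i1 -> i2 -> i0 of
   their cliques. *)
Lemma power_update_edge n (u : {ffun 'I_n -> T}) j y :
  e (u j) y -> connect (@power_rel _ e n) u (upd u j y).
Proof.
move=> euy; have [pc_clique pc_root] := power_rooted u.
have [cy cy_root] := cl_rooted y; have i10 : i1 != i0 by rewrite eq_sym.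
have e1 := upd_edge j (pc_clique _ _ i01) euy.
have e2 := upd_edge j (pc_clique _ _ i12) (cy _ _ i01).
have e3 := upd_edge j (pc_clique _ _ i20) (cy _ _ i10).
rewrite pc_root upd_same in e1; rewrite cy_root in e2; rewrite pc_root cy_root in e3.
exact: connect_trans (connect1 e1) (connect_trans (connect1 e2) (connect1 e3)).
Qed.

Lemma power_update n (u : {ffun 'I_n -> T}) j y :
  connect (@power_rel _ e n) u (upd u j y).
Proof.
apply: (connect_propagate (Q := fun z => connect _ u (upd u j z)) _ _ (e_conn (u j) y)).
  by rewrite upd_same connect0.
move=> z z' uz ezz'; apply: connect_trans uz _.
by rewrite -(upd_upd u j z z'); apply: power_update_edge; rewrite upd_at.
Qed.

Lemma power_connected n : connected (@power_rel _ e n).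
Proof.
move=> u v.
pose mix (s : seq 'I_n) : {ffun 'I_n -> T} := [ffun l => if l \in s then v l else u l].
have mix_conn s : connect (@power_rel _ e n) u (mix s).
  elim: s => [|x s IH].
    by rewrite (_ : mix [::] = u) //; apply/ffunP => l; rewrite ffunE.
  rewrite (_ : mix (x :: s) = upd (mix s) x (v x)).
    exact: connect_trans IH (power_update _ _ _).
  by apply/ffunP => l; rewrite !ffunE in_cons; case: eqP => [->|].
by rewrite (_ : v = mix (enum 'I_n)) //; apply/ffunP => l; rewrite ffunE mem_enum.
Qed.

(* Every proper k-coloring of H^(n+1) depends on a single coordinate: by the
   two-factor theorem on H^n x H it depends on the last coordinate or on the
   first n; in the latter case it agrees with the coloring
   a |-> Phi (extend a (a ord0)) of H^n, and induction applies. *)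
Lemma power_coloring_coordinate n (Phi : {ffun 'I_n.+1 -> T} -> 'I_k) :
  proper_coloring (@power_rel _ e n.+1) Phi ->
  exists i, forall u v : {ffun 'I_n.+1 -> T}, u i = v i -> Phi u = Phi v.
Proof.
elim: n Phi => [|n IH] Phi Phi_proper.
  by exists ord0 => u v uv; congr Phi; apply/ffunP => l; rewrite (ord1 l).
have Phi_ext_proper :
    product_proper (@power_rel _ e n.+1) e (fun a b => Phi (extend a b)).
  by move=> a a' b b' ea eb; apply/Phi_proper/extend_edge.
have [last_only|first_only] := product_coloring_factor (ord_neq_gt1 i01)
  (@power_sym _) e_sym (@power_connected _) e_conn (@power_rooted _) cl_rooted
  Phi_ext_proper.
  exists ord_max => u v uv; rewrite -(extendK u) -(extendK v) uv.
  exact: last_only.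
pose psi a := Phi (extend a (a ord0)).
have psi_proper : proper_coloring (@power_rel _ e n.+1) psi.
  by move=> a a' ea; apply/Phi_proper/extend_edge => //; apply: (forallP ea).
have [i psi_i] := IH psi psi_proper.
exists (lift ord_max i) => u v uv.
rewrite -(extendK u) -(extendK v) (first_only (restrict u) _ (restrict u ord0)).
rewrite (first_only (restrict v) _ (restrict v ord0)).
by apply: (psi_i (restrict u) (restrict v)); rewrite !ffunE.
Qed.

End PowerGraph.

(* If every vertex lies in a clique of size k, rooted k-cliques can be chosen
   uniformly: enumerate the clique, then move v to position i0. *)
Lemma rooted_cliques_exist (T : finType) (e : rel T) k (i0 : 'I_k) :
  (forall v, exists K : {set T}, [/\ v \in K, clique e K & #|K| = k]) ->
  exists cl, rooted_cliques e i0 cl.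
Proof.
move=> cliques.
have rooted v : exists F : {ffun 'I_k -> T},
    [forall i, forall j, (i != j) ==> e (F i) (F j)] && (F i0 == v).
  have [K [vK cK cardK]] := cliques v.
  pose enumK (i : 'I_k) := enum_val (cast_ord (esym cardK) i).
  pose r := cast_ord cardK (enum_rank_in vK v).
  exists [ffun i => enumK (tperm i0 r i)]; apply/andP; split.
    apply/forallP => i; apply/forallP => j; apply/implyP => ij; rewrite !ffunE.
    apply: cK; [exact: enum_valP | exact: enum_valP |].
    by rewrite (inj_eq enum_val_inj) (inj_eq (@cast_ord_inj _ _ _)) (inj_eq perm_inj).
  by rewrite ffunE tpermL /enumK /r cast_ordK enum_rankK_in.
exists (fun v => xchoose (rooted v) : 'I_k -> T) => v.
have /andP [/forallP clique_v /eqP root_v] := xchooseP (rooted v).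
by split=> // i j ij; apply: (implyP (forallP (clique_v i) j)).
Qed.

Theorem mainTheorem11 (T : finType) (e : rel T) :
  simple_graph e -> connected e -> weakly_cliqued e -> 3 <= chi e ->
  trivially_power_colorable e.
Proof.
move=> [e_sym _] e_conn e_cliqued chi_ge3.
pose i0 : 'I_(chi e) := Ordinal (ltnW (ltnW chi_ge3)).
pose i1 : 'I_(chi e) := Ordinal (ltnW chi_ge3).
pose i2 : 'I_(chi e) := Ordinal chi_ge3.
have [cl cl_rooted] := rooted_cliques_exist i0 e_cliqued.
move=> [//|n] _ Phi Phi_proper.
have [i Phi_i] := power_coloring_coordinate e_sym e_conn cl_rooted
  (i1 := i1) (i2 := i2) isT isT isT Phi_proper.
exists i, (fun x => Phi [ffun _ => x]); split.
  by move=> x y exy; apply: Phi_proper; apply/forallP => l; rewrite !ffunE.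
by move=> v; apply: Phi_i; rewrite ffunE.
Qed.
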